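(* Let $p$ be a prime and let $G$ be a finite $p$-group such that $\mathrm{cod}(G)=\{1,p,p^b,p^a\}$, where $2\le b<a$, and suppose $G$ has nilpotence class $n\ge 3$. Suppose $|G|$ is minimal with this property, i.e. no finite $p$-group $H$ with $\mathrm{cod}(H)=\{1,p,p^b,p^a\}$ and $|H|<|G|$ has nilpotence class $n$. Then $G$ has a faithful irreducible character.
   Context: For an irreducible complex character $\chi$ of a finite group $G$, the codegree of $\chi$ is $\mathrm{cod}(\chi)=|G:\ker\chi|/\chi(1)$, and $\mathrm{cod}(G)$ denotes the set of codegrees of the irreducible characters of $G$. *)

From mathcomp Require Import all_boot all_order all_algebra all_fingroup all_solvable all_field all_character.
Set Implicit Arguments. Unset Strict Implicit. Unset Printing Implicit Defensive.
Import GRing.Theory Num.Theory.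
Local Open Scope ring_scope.

Definition cod (gT : finGroupType) (G : {group gT}) (i : Iirr G) : algC :=
  (#|G : cfker 'chi[G]_i|%g%:R) / 'chi[G]_i 1%g.

Definition cod_set_eq (gT : finGroupType) (G : {group gT}) (S : seq algC) : Prop :=
  forall x : algC, (exists i : Iirr G, cod i = x) <-> x \in S.

From mathcomp Require Import all_boot all_order all_algebra all_fingroup all_solvable all_field all_character.
From mathcomp Require Import zify.
Set Implicit Arguments. Unset Strict Implicit. Unset Printing Implicit Defensive.
Local Open Scope ring_scope.

Import Order.TTheory GRing.Theory Num.Theory.

(* Suppose G has no faithful irreducible character.  Pick an irreducible chi whose
   kernel K does not contain 'L_n(G); then K <> 1, G/K still has class n, and
   cod(G/K) is contained in cod(G).  Every p-group of class at least 3 has two distinct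
   codegrees larger than p, and every nontrivial p-group has a linear character of
   order p, so cod(G/K) = cod(G), contradicting the minimality of |G|.

   The two codegrees are found by induction on |P|, passing to P/ker chi as above
   when P has no faithful irreducible character.  A faithful chi0 has
   cod chi0 = |P|/chi0(1) > p^2, since chi0(1)^2 <= |P : Z(P)| and P/Z(P) is
   nonabelian.  If some x^p lies outside P', a linear character of order p^2 gives
   the second codegree.  Otherwise let M be maximal among the normal subgroups
   containing Z(P) but not P', and chi have kernel M: chi is fully ramified over
   Z(chi), |Z(chi) : M| <= p^2, and cod chi = cod chi0 would force Z(P) = M to have
   order p, making the cyclic group Z(chi)/M of exponent p, hence too small. *)

Section Codegree.
Variables (gT : finGroupType) (G : {group gT}).

Lemma cod_irr0 : cod (0 : Iirr G) = 1.
Proof. by rewrite /cod cfker_irr0 indexgg irr0 cfun11 divr1. Qed.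

Lemma cod_mod_Iirr (N : {group gT}) (nsNG : (N <| G)%g) (i : Iirr (G / N)) :
  cod (mod_Iirr i) = cod i.
Proof.
rewrite /cod mod_IirrE // cfMod1; congr (_%:R / _).
rewrite -(quotient_cfker_mod G 'chi_i nsNG); symmetry; apply: index_quotient_eq.
- by apply/subIset/orP; right; apply: cfker_mod.
- exact: cfker_sub.
- exact: normal_norm.
Qed.

Lemma irr1_natP (i : Iirr G) : exists2 d : nat, 'chi_i 1%g = d%:R & (0 < d)%N.
Proof. by exists (irr_degree (socle_of_Iirr i)); rewrite ?irr1_degree ?irr_degree_gt0. Qed.

Lemma irr1_sq_le_index_cfcenter (i : Iirr G) d : 'chi_i 1%g = d%:R ->
  (d * d <= #|G : 'Z('chi_i)%CF|%g)%N.
Proof. by move=> chi1; have := (irr1_bound i).1; rewrite chi1 -natrX ler_nat -mulnn. Qed.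

Lemma ltr_nat_cod (i : Iirr G) (d q : nat) : 'chi_i 1%g = d%:R ->
  (q%:R < cod i) = (q * d < #|G : cfker 'chi_i|%g)%N.
Proof.
move=> chi1; have := irr1_gt0 i; rewrite chi1 ltr0n => d_gt0.
by rewrite /cod chi1 ltr_pdivlMr ?ltr0n // -natrM ltr_nat.
Qed.

Lemma eq_cod (i j : Iirr G) (di dj : nat) :
  'chi_i 1%g = di%:R -> 'chi_j 1%g = dj%:R ->
  (cod i == cod j) = (#|G : cfker 'chi_i|%g * dj == #|G : cfker 'chi_j|%g * di)%N.
Proof.
move=> chi1 psi1; have := irr1_gt0 i; have := irr1_gt0 j.
rewrite chi1 psi1 !ltr0n => dj_gt0 di_gt0.
by rewrite /cod chi1 psi1 eqr_div ?pnatr_eq0 -?lt0n // -!natrM eqr_nat.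
Qed.

Lemma cod_lin_char (i : Iirr G) :
  'chi_i \is a linear_char -> cod i = (#['chi_i]%CF)%:R.
Proof.
move=> lin_i; rewrite /cod lin_char1 // divr1 cforder_lin_char //.
have cGK : abelian (G / cfker 'chi_i)%g by apply/sub_der1_abelian/lin_char_der1.
have cycGK : cyclic (G / cfker 'chi_i)%g.
  by have := cfcenter_cyclic 'chi_i; rewrite cfcenter_eq_center (center_idP cGK).
by rewrite exponent_cyclic // card_quotient // normal_norm ?cfker_normal.
Qed.

End Codegree.

Section KernelsAndClass.
Variables (gT : finGroupType) (G : {group gT}).

Lemma nonfaithful_irr_cfker (A : {group gT}) :
  (forall i : Iirr G, ~~ cfaithful 'chi_i) -> (A :!=: 1)%g ->
  exists i : Iirr G, (cfker 'chi_i != 1)%g && ~~ (A \subset cfker 'chi_i).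
Proof.
move=> no_fful ntA; have [i A_notin_ker] : exists i : Iirr G, ~~ (A \subset cfker 'chi_i).
  apply/existsP; apply: contraR ntA => /existsPn A_in_ker.
  rewrite -subG1 -(TI_cfker_irr G); apply/bigcapsP => i _.
  by have := A_in_ker i; rewrite negbK.
exists i; rewrite A_notin_ker andbT.
by apply: contra (no_fful i) => /eqP ker1; rewrite cfaithfulE ker1.
Qed.

Lemma nil_class_quotient_leq (K : {group gT}) m : (K <| G)%g -> nilpotent G ->
  (nil_class (G / K) <= m)%N = ('L_m.+1(G) \subset K)%g.
Proof.
move=> nsKG nilG; have nKG := normal_norm nsKG.
have nLK : ('L_m.+1(G) \subset 'N(K))%g by apply: subset_trans nKG; apply: lcn_sub.
rewrite -(quotient_sub1 nLK) /quotient (morphim_lcn _ _ nKG) -/(quotient _ _).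
by apply/(lcn_nil_classP m (quotient_nil K nilG))/trivgP.
Qed.

Lemma nil_class_quotient_id (K : {group gT}) : (K <| G)%g -> nilpotent G ->
  ~~ ('L_(nil_class G)(G) \subset K)%g -> nil_class (G / K) = nil_class G.
Proof.
move=> nsKG nilG L_notin_K; have c_gt0 : (0 < nil_class G)%N.
  rewrite lt0n nil_class0; apply: contra L_notin_K => /eqP G1.
  by rewrite (subset_trans (lcn_sub _ _)) // G1 sub1G.
apply/eqP; rewrite eqn_leq nil_class_quotient_leq //.
have /(lcn_nil_classP _ nilG)-> := leqnn (nil_class G); rewrite sub1G /=.
by rewrite -{1}(prednK c_gt0) ltnNge nil_class_quotient_leq // prednK.
Qed.

End KernelsAndClass.

Lemma cforderX_divn (gT : finGroupType) (G : {group gT}) (phi : 'CF(G)) m :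
  (0 < #[phi]%CF)%N -> (m %| #[phi]%CF)%N -> #[phi ^+ (#[phi]%CF %/ m)]%CF = m.
Proof.
move=> phi_gt0 m_dvd; set q := (#[phi]%CF %/ m)%N.
have q_gt0 : (0 < q)%N by rewrite divn_gt0 ?(dvdn_gt0 phi_gt0 m_dvd) // dvdn_leq.
have dvd_ord k : (#[phi ^+ q]%CF %| k)%N = (m %| k)%N.
  by rewrite dvdn_cforder -exprM -dvdn_cforder -{1}(divnK m_dvd) dvdn_pmul2l.
by apply/eqP; rewrite eqn_dvd dvd_ord dvdnn -dvd_ord dvdnn.
Qed.

Lemma pgroup_card_ge (gT : finGroupType) (A : {group gT}) (p : nat) :
  (p.-group A)%g -> (A :!=: 1)%g -> (p <= #|A|)%N.
Proof. by move=> pA ntA; have [_ p_dvd _] := pgroup_pdiv pA ntA; apply: dvdn_leq. Qed.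

Section PGroups.
Variables (gT : finGroupType) (G : {group gT}) (p : nat).
Hypotheses (pr_p : prime p) (pG : (p.-group G)%g).

Lemma pgroup_cod_pexp (x : gT) e : x \in G -> (x ^+ (p ^ e) \notin G^`(1))%g ->
  exists j : Iirr G, cod j = (p ^ e.+1)%:R.
Proof.
move=> Gx xe_notin_G'.
have [i /andP[lin_i xe_notin_ker]] : exists i : Iirr G,
    ('chi_i \is a linear_char) && (x ^+ (p ^ e) \notin cfker 'chi_i)%g.
  apply/existsP; apply: contraR xe_notin_G' => /existsPn xe_in_ker.
  rewrite -cap_cfker_lin_irr; apply/bigcapP => i lin_i.
  by have := xe_in_ker i; rewrite lin_i negbK.
have ord_ndvd : ~~ (#['chi_i]%CF %| p ^ e)%N.
  apply: contra xe_notin_ker => /dvdn_cforderP/(_ x Gx) chi_xe.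
  by rewrite cfkerEchar ?lin_charW // inE groupX //= lin_charX // chi_xe lin_char1.
have [k _ ord_i] : exists2 k, (k <= logn p #|G|)%N & #['chi_i]%CF = (p ^ k)%N.
  apply/dvdn_pfactor => //; have [n cardG] := p_natP pG.
  by rewrite cardG pfactorK // -cardG cforder_lin_char_dvdG.
have e_lt_k : (e < k)%N by rewrite ltnNge -(dvdn_Pexp2l _ _ (prime_gt1 pr_p)) -ord_i.
have /irrP[j chi_j] := lin_char_irr (rpredX (#['chi_i]%CF %/ p ^ e.+1) lin_i).
exists j; rewrite cod_lin_char -chi_j ?cforderX_divn ?cforder_lin_char_gt0 //.
- by rewrite ord_i dvdn_Pexp2l ?prime_gt1.
- exact: rpredX.
Qed.

Lemma pgroup_cod_p : (G :!=: 1)%g -> exists i : Iirr G, cod i = p%:R.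
Proof.
move=> ntG; have /properP[_ [x Gx x_notin_G']] :=
  sol_der1_proper (pgroup_sol pG) (subxx G) ntG.
by have := @pgroup_cod_pexp x 0 Gx; rewrite expn0 expg1 expn1; apply.
Qed.

Lemma der1_sub_of_index_le_psq (H : {group gT}) :
  (H <| G)%g -> (#|G : H|%g <= p ^ 2)%N -> (G^`(1) \subset H)%g.
Proof.
move=> nsHG le_GH; have nHG := normal_norm nsHG.
apply: der1_min (nHG) (p2group_abelian (quotient_pgroup H pG) _).
have [k /= cardGH] := p_natP (quotient_pgroup H pG).
rewrite cardGH pfactorK // -(leq_exp2l _ _ (prime_gt1 pr_p)) -cardGH.
by rewrite card_quotient.
Qed.

Lemma pgroup_cod_gt_p (i : Iirr G) :
  ~~ ('chi_i \is a linear_char) -> p%:R < cod i.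
Proof.
move=> nlin_i; have [d chi1 d_gt0] := irr1_natP i.
have d_neq1 : d != 1%N.
  by apply: contra nlin_i => /eqP d1; rewrite qualifE /= irr_char chi1 d1 eqxx.
have d_gt1 : (1 < d)%N by lia.
rewrite (ltr_nat_cod _ chi1).
have nKG : (G \subset 'N(cfker 'chi_i))%g := normal_norm (cfker_normal _).
have ntGK : (G / cfker 'chi_i :!=: 1)%g.
  apply: contra nlin_i => /eqP/trivgP; rewrite quotient_sub1 // => sGK.
  by rewrite lin_irr_der1 (subset_trans (der_sub 1 G)).
have p_le_ZcK : (p <= #|'Z('chi_i)%CF : cfker 'chi_i|%g)%N.
  rewrite -card_quotient ?(subset_trans (cfcenter_sub _)) // cfcenter_eq_center.
  apply: pgroup_card_ge; first exact: pgroupS (center_sub _) (quotient_pgroup _ pG).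
  by rewrite center_nil_eq1 // quotient_nil // (pgroup_nil pG).
have d_sq := irr1_sq_le_index_cfcenter chi1.
have p_gt0 := prime_gt0 pr_p.
rewrite -(Lagrange_index (cfcenter_sub _) (normal_sub (cfker_center_normal _))) /=.
nia.
Qed.

Lemma faithful_cod_gt_psq (i : Iirr G) :
  ~~ (G^`(1) \subset 'Z(G))%g -> cfaithful 'chi_i -> (p ^ 2)%:R < cod i.
Proof.
move=> G'_notin_Z fful_i; have [d chi1 _] := irr1_natP i.
rewrite (ltr_nat_cod _ chi1); have /trivgP-> := fful_i; rewrite indexg1.
have d_sq := irr1_sq_le_index_cfcenter chi1; rewrite cfcenter_fful_irr // in d_sq.
have p_le_Z : (p <= #|'Z(G)%g|)%N.
  apply: pgroup_card_ge; first exact: pgroupS (center_sub _) pG.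
  rewrite center_nil_eq1 ?(pgroup_nil pG) //; apply: contraNneq G'_notin_Z => ->.
  by rewrite (subset_trans (der_sub 1 _)) ?sub1G.
have psq_lt_GZ : (p ^ 2 < #|G : 'Z(G)%g|%g)%N.
  rewrite ltnNge; apply: contra G'_notin_Z.
  exact: der1_sub_of_index_le_psq (center_normal G).
have pd_lt : (p * d < #|G : 'Z(G)%g|%g)%N.
  rewrite -ltn_sqr (leq_ltn_trans (_ : _ <= p ^ 2 * #|G : 'Z(G)%g|%g)%N) //.
    by rewrite expnMn leq_mul2l -[(d ^ 2)%N]mulnn d_sq orbT.
  nia.
rewrite -(Lagrange (center_sub G)) expnS expn1 -mulnA.
apply: leq_trans (_ : p * #|G : 'Z(G)%g|%g <= _)%N; first by rewrite ltn_pmul2l ?prime_gt0.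
by rewrite leq_mul2r p_le_Z orbT.
Qed.

End PGroups.

Lemma expg_in_center (gT : finGroupType) (G : {group gT}) (x : gT) n :
  x \in G -> {in G, forall y, [~ x, y] \in 'Z(G)}%g -> (exponent 'Z(G) %| n)%N ->
  (x ^+ n \in 'Z(G))%g.
Proof.
move=> Gx cxZ expZ; apply/centerP; split=> [|y Gy]; first exact: groupX.
have cxyZ := cxZ y Gy.
apply/commgP; rewrite commXg; last exact (centerC Gx cxyZ).
exact/eqP/(exponentP expZ).
Qed.

Section MaximalKernel.
Variables (gT : finGroupType) (P M : {group gT}) (p : nat).
Hypotheses (pr_p : prime p) (pP : (p.-group P)%g).
Hypothesis maxM : [max M | (M <| P) && ~~ (P^`(1) \subset M)]%g.

Let nsMP : (M <| P)%g. Proof. by have /maxgroupp/andP[] := maxM. Qed.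
Let der1_notin_M : ~~ (P^`(1) \subset M)%g. Proof. by have /maxgroupp/andP[] := maxM. Qed.
Let nMP : (P \subset 'N(M))%g. Proof. exact: normal_norm nsMP. Qed.

Let ntZPM : ('Z(P / M) :!=: 1)%g.
Proof.
rewrite center_nil_eq1 ?quotient_nil ?(pgroup_nil pP) //.
apply: contra der1_notin_M => /eqP/trivgP; rewrite quotient_sub1 // => sPM.
exact: subset_trans (der_sub 1 P) sPM.
Qed.

Lemma der1_sub_normal_over_maxgroup (O : {group gT}) :
  (O <| P)%g -> (M \proper O)%g -> (P^`(1) \subset O)%g.
Proof.
move=> nsOP /andP[sMO nsOM]; apply: contraR nsOM => der1_notin_O.
by rewrite -((maxgroupP maxM).2 O) ?nsOP.
Qed.

Lemma card_der1_quotient_maxgroup : #|P^`(1) / M|%g = p.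
Proof.
have [_ p_dvd _] := pgroup_pdiv (pgroupS (center_sub _) (quotient_pgroup M pP)) ntZPM.
have [y Zy oy] := Cauchy pr_p p_dvd.
pose O := (coset M @*^-1 <[y]>)%G.
have nsOP : (O <| P)%g.
  rewrite -[X in (_ <| X)%g](quotientGK nsMP) cosetpre_normal.
  by apply: sub_center_normal; rewrite cycle_subG.
have sMO : (M \proper O)%g.
  rewrite properEneq sub_cosetpre andbT; apply: contraTneq (prime_gt1 pr_p) => MO.
  by rewrite -oy orderE -(cosetpreK <[y]>%g) -/(gval O) -MO trivg_quotient cards1.
have /(quotientS M) := der1_sub_normal_over_maxgroup nsOP sMO.
rewrite cosetpreK => /cardSg; rewrite -orderE oy; apply/prime_nt_dvdP => //.
by rewrite -trivg_card1 -subG1 quotient_sub1 // (subset_trans (der_sub 1 P) nMP).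
Qed.

Lemma exists_irr_cfker_maxgroup : exists i : Iirr P, cfker 'chi_i = M.
Proof.
have [i /andP[sMi der1_notin_i]] : exists i : Iirr P,
    (M \subset cfker 'chi_i)%g && ~~ (P^`(1) \subset cfker 'chi_i)%g.
  apply/existsP; apply: contraR der1_notin_M => /existsPn der1_in_ker.
  rewrite -(cap_cfker_normal nsMP); apply/bigcapsP => i sMi.
  by have := der1_in_ker i; rewrite sMi negbK.
exists i; apply: (maxgroupP maxM).2 (cfker_group 'chi_i) _ sMi.
by rewrite cfker_normal der1_notin_i.
Qed.

Variable i : Iirr P.
Hypothesis kerM : cfker 'chi_i = M.

Lemma maxgroup_irr_nonlinear : ~~ ('chi_i \is a linear_char).
Proof. by rewrite lin_irr_der1 kerM. Qed.

Lemma cfcenter_quotient_maxgroup : ('Z('chi_i)%CF / M)%g = 'Z(P / M)%g.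
Proof. by rewrite -kerM cfcenter_eq_center. Qed.

Lemma der1_sub_cfcenter_maxgroup : (P^`(1) \subset 'Z('chi_i)%CF)%g.
Proof.
apply: der1_sub_normal_over_maxgroup; first exact: cfcenter_normal.
rewrite properEneq -{2}kerM (normal_sub (cfker_center_normal _)) andbT.
apply/eqP => MZc; move: ntZPM.
by rewrite -cfcenter_quotient_maxgroup -MZc trivg_quotient eqxx.
Qed.

Lemma index_cfcenter_dvd_maxgroup n :
  {in 'Z('chi_i)%CF, forall w, w ^+ n \in M}%g -> (#|'Z('chi_i)%CF : M|%g %| n)%N.
Proof.
move=> expZc; have nZcM := subset_trans (cfcenter_sub 'chi_i) nMP.
have cycZcM : cyclic ('Z('chi_i)%CF / M)%g by rewrite -kerM cfcenter_cyclic.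
rewrite -(card_quotient nZcM) -exponent_cyclic //.
apply/exponentP => _ /morphimP[w Nw Zw ->].
by rewrite -morphX //; apply: coset_id; apply: expZc.
Qed.

Lemma index_cfcenter_dvd_psq_maxgroup : {in P, forall x, x ^+ p \in P^`(1)}%g ->
  (#|'Z('chi_i)%CF : M|%g %| p ^ 2)%N.
Proof.
move=> expP; apply: index_cfcenter_dvd_maxgroup => w Zw.
have Pw := subsetP (cfcenter_sub _) w Zw; have Nw := subsetP nMP w Pw.
have /expg_cardG : coset M (w ^+ p) \in (P^`(1) / M)%g by apply/mem_quotient/expP.
rewrite card_der1_quotient_maxgroup => cwp2.
apply: coset_idr; first exact: groupX.
by rewrite expnS expn1 expgM morphX ?groupX.
Qed.

Lemma card_le_index_cfcenter_of_cod_eq (j : Iirr P) : cfaithful 'chi_j ->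
  cod i = cod j -> (#|M| * #|'Z(P)%g| <= #|'Z('chi_i)%CF : M|%g)%N.
Proof.
move=> fful_j cod_ij.
have [e chi1 e_gt0] := irr1_natP i; have [d psi1 _] := irr1_natP j.
move/eqP: cod_ij; rewrite (eq_cod chi1 psi1) kerM; have /trivgP-> := fful_j.
rewrite indexg1 => /eqP cod_ij.
have e_sq : (e * e = #|P : 'Z('chi_i)%CF|%g)%N.
  have := sub_der1_abelian (H := cfcenter_group 'chi_i) der1_sub_cfcenter_maxgroup.
  move/irr1_abelian_bound; rewrite chi1 -natrX -mulnn => /eqP.
  by rewrite eqr_nat => /eqP.
have d_sq := irr1_sq_le_index_cfcenter psi1; rewrite cfcenter_fful_irr // in d_sq.
(* [cod i = cod j] reads |P : M| d = |P| e; with e^2 = |P : Z(chi_i)| this gives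
   d = |M| e, and then d^2 <= |P : Z(P)| is the claimed bound. *)
have LagM := Lagrange_index (cfcenter_sub 'chi_i) (normal_sub (cfker_center_normal 'chi_i)).
have LagP := Lagrange (normal_sub nsMP); have LagZ := Lagrange (center_sub P).
rewrite /= kerM -e_sq in LagM; rewrite -LagP -LagM in cod_ij; rewrite -LagP -LagM in LagZ.
have M_gt0 := cardG_gt0 M; have t_gt0 := indexg_gt0 'Z('chi_i)%CF M.
move: cod_ij LagZ d_sq t_gt0 M_gt0.
move: #|M| #|'Z(P)%g| #|P : 'Z(P)%g|%g #|'Z('chi_i)%CF : M|%g.
move=> m z w t cod_ij LagZ d_sq t_gt0 m_gt0.
have dE : d = (m * e)%N.
  by apply/eqP; rewrite -(eqn_pmul2l (_ : 0 < e * e * t)%N) ?cod_ij; [apply/eqP; lia | nia].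
rewrite -(leq_pmul2l (_ : 0 < m * (e * e))%N); last by nia.
apply: leq_trans (_ : z * (d * d) <= _)%N; first by rewrite dE; nia.
by rewrite (leq_trans (leq_mul (leqnn z) d_sq)) // LagZ; nia.
Qed.

Lemma cod_maxgroup_neq_faithful (j : Iirr P) :
  ('Z(P) \subset M)%g -> {in P, forall x, x ^+ p \in P^`(1)}%g -> cfaithful 'chi_j ->
  cod i != cod j.
Proof.
move=> sZM expP fful_j; apply/eqP => cod_ij.
have MZ_le_t := card_le_index_cfcenter_of_cod_eq fful_j cod_ij.
have t_le_psq : (#|'Z('chi_i)%CF : M|%g <= p ^ 2)%N.
  by apply: dvdn_leq (index_cfcenter_dvd_psq_maxgroup expP); rewrite expn_gt0 prime_gt0.
have p_le_Z : (p <= #|'Z(P)%g|)%N.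
  apply: pgroup_card_ge (pgroupS (center_sub P) pP) _.
  rewrite center_nil_eq1 ?(pgroup_nil pP) //; apply: contraNneq der1_notin_M => ->.
  by rewrite (subset_trans (der_sub 1 _)) ?sub1G.
have Z_le_M := subset_leq_card sZM.
have [cardZ cardM] : #|'Z(P)%g| = p /\ #|M| = p.
  move: MZ_le_t t_le_psq p_le_Z Z_le_M (prime_gt0 pr_p).
  by move: #|M| #|'Z(P)%g| #|'Z('chi_i)%CF : M|%g => m z t; nia.
have ZM : 'Z(P)%g = M by apply/eqP; rewrite eqEcard sZM cardZ cardM /=.
have cZcP : ([~: 'Z('chi_i)%CF, P] \subset M)%g.
  rewrite -quotient_cents2 ?(subset_trans (cfcenter_sub _)) //.
  by rewrite cfcenter_quotient_maxgroup subsetIr.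
have t_dvd_p : (#|'Z('chi_i)%CF : M|%g %| p)%N.
  apply: index_cfcenter_dvd_maxgroup => w Zw; rewrite -ZM.
  apply: expg_in_center; first exact: subsetP (cfcenter_sub _) w Zw.
    by move=> y Py; rewrite ZM (subsetP cZcP) // mem_commg.
  by rewrite -cardZ exponent_dvdn.
have := dvdn_leq (prime_gt0 pr_p) t_dvd_p; have := prime_gt1 pr_p; nia.
Qed.

End MaximalKernel.

Lemma two_cods_gt_p_of_faithful (gT : finGroupType) (P : {group gT}) (p : nat)
    (i0 : Iirr P) :
  prime p -> (p.-group P)%g -> ~~ (P^`(1) \subset 'Z(P))%g -> cfaithful 'chi_i0 ->
  exists i j : Iirr P, [/\ p%:R < cod i, p%:R < cod j & cod i != cod j].
Proof.
move=> pr_p pP der1_notin_Z fful_i0.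
have psq_lt_cod0 := faithful_cod_gt_psq pr_p pP der1_notin_Z fful_i0.
have p_lt_psq : p%:R < (p ^ 2)%:R :> algC.
  by rewrite ltr_nat -{1}(expn1 p) ltn_exp2l ?prime_gt1.
have p_lt_cod0 := lt_trans p_lt_psq psq_lt_cod0.
have [/forall_inP expP | /forall_inPn[x Px xp_notin_P']] :=
  boolP [forall x in P, x ^+ p \in P^`(1)]%g; last first.
  have [j cod_j] : exists j : Iirr P, cod j = (p ^ 2)%:R.
    by apply: (pgroup_cod_pexp pr_p pP Px); rewrite expn1.
  by exists j, i0; rewrite cod_j p_lt_psq p_lt_cod0 lt_eqF.
have [M maxM sZM] : {M : {group gT} |
    [max M | (M <| P) && ~~ (P^`(1) \subset M)] & 'Z(P) \subset M}%g.
  by apply: maxgroup_exists; rewrite center_normal.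
have [i kerM] := exists_irr_cfker_maxgroup maxM.
exists i, i0; split=> //.
  exact: (pgroup_cod_gt_p pr_p pP (maxgroup_irr_nonlinear maxM kerM)).
by apply: (cod_maxgroup_neq_faithful pr_p pP maxM kerM sZM _ fful_i0) => x /expP.
Qed.

Lemma two_cods_gt_p (p : nat) : prime p ->
  forall (gT : finGroupType) (P : {group gT}), (p.-group P)%g -> (2 < nil_class P)%N ->
  exists i j : Iirr P, [/\ p%:R < cod i, p%:R < cod j & cod i != cod j].
Proof.
move=> pr_p gT P; move: {2}#|P| (leqnn #|P|) => n.
elim: n gT P => [|n IHn] gT P le_P_n pP class_gt2.
  by move: le_P_n; rewrite leqNgt cardG_gt0.
have [/existsP[i0 fful_i0] | /existsPn no_fful] := boolP [exists i : Iirr P, cfaithful 'chi_i].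
  by apply: two_cods_gt_p_of_faithful pr_p pP _ fful_i0; rewrite -nil_class2 -ltnNge.
have nilP := pgroup_nil pP.
have ntL3 : ('L_3(P) :!=: 1)%g.
  by apply: contraTneq class_gt2 => /(lcn_nil_classP 2 nilP); rewrite -leqNgt.
have [i /andP[ntK L3_notin_K]] := nonfaithful_irr_cfker no_fful ntL3.
have nsKP := cfker_normal 'chi_i.
have [|||i' [j' [p_lt_i' p_lt_j' cod_ij']]] := IHn _ (P / cfker 'chi_i)%G.
- by rewrite -ltnS (leq_trans _ le_P_n) // ltn_quotient // cfker_sub.
- exact: quotient_pgroup.
- by rewrite ltnNge nil_class_quotient_leq.
by exists (mod_Iirr i'), (mod_Iirr j'); rewrite !cod_mod_Iirr.
Qed.

Lemma cod_set_eq_of_nil_class (gT : finGroupType) (H : {group gT}) (p a b : nat) :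
  prime p -> (p.-group H)%g -> (2 < nil_class H)%N ->
  (forall i : Iirr H, cod i \in [:: 1; p%:R; (p ^ b)%:R; (p ^ a)%:R]) ->
  cod_set_eq H [:: 1; p%:R; (p ^ b)%:R; (p ^ a)%:R].
Proof.
move=> pr_p pH class_gt2 codH x; split=> [[i <-] // | ].
have [i [j [p_lt_i p_lt_j cod_ij]]] := two_cods_gt_p pr_p pH class_gt2.
have big_cod (k : Iirr H) : p%:R < cod k -> cod k = (p ^ b)%:R \/ cod k = (p ^ a)%:R.
  move: (codH k); rewrite !inE => /or4P[] /eqP-> //; try by [left | right].
    by rewrite ltrn1 ltnNge prime_gt0.
  by rewrite ltxx.
have [cod_b cod_a] :
    (exists k : Iirr H, cod k = (p ^ b)%:R) /\ (exists k : Iirr H, cod k = (p ^ a)%:R).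
  case: (big_cod i p_lt_i) (big_cod j p_lt_j) => [] cod_i [] cod_j.
  - by move: cod_ij; rewrite cod_i cod_j eqxx.
  - by split; [exists i | exists j].
  - by split; [exists j | exists i].
  - by move: cod_ij; rewrite cod_i cod_j eqxx.
rewrite !inE => /or4P[] /eqP-> //; first by exists 0; apply: cod_irr0.
apply: (pgroup_cod_p pr_p pH); apply: contraTneq class_gt2 => H1.
by have /eqP-> : nil_class H == 0%N by rewrite nil_class0 H1.
Qed.

Theorem lemma2p6 (gT : finGroupType) (G : {group gT}) (p a b n : nat) :
  prime p -> (p.-group G)%g ->
  (2 <= b)%N -> (b < a)%N ->
  cod_set_eq G [:: 1; p%:R; (p ^ b)%:R; (p ^ a)%:R] ->
  nil_class G = n -> (3 <= n)%N ->
  (forall (hT : finGroupType) (H : {group hT}),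
      (p.-group H)%g ->
      cod_set_eq H [:: 1; p%:R; (p ^ b)%:R; (p ^ a)%:R] ->
      (#|H| < #|G|)%N -> nil_class H <> n) ->
  exists i : Iirr G, cfaithful 'chi[G]_i.
Proof.
move=> pr_p pG _ _ codG classG class_ge3 minG.
have [/existsP[i fful_i] | /existsPn no_fful] := boolP [exists i : Iirr G, cfaithful 'chi_i].
  by exists i.
have nilG := pgroup_nil pG.
have ntLn : ('L_n(G) :!=: 1)%g.
  have n_gt0 : (0 < n)%N by apply: leq_trans class_ge3.
  apply/eqP; rewrite -(prednK n_gt0) => /(lcn_nil_classP _ nilG).
  by rewrite classG -ltnS prednK // ltnn.
have [i /andP[ntK Ln_notin_K]] := nonfaithful_irr_cfker no_fful ntLn.
have nsKG := cfker_normal 'chi_i.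
have classGK : nil_class (G / cfker 'chi_i) = n by rewrite nil_class_quotient_id // classG.
case: (minG _ (G / cfker 'chi_i)%G (quotient_pgroup _ pG) _ _ classGK).
- apply: cod_set_eq_of_nil_class => [||| j] //; first exact: quotient_pgroup.
    by rewrite classGK.
  by rewrite -cod_mod_Iirr //; apply/codG; exists (mod_Iirr j).
- by rewrite ltn_quotient // cfker_sub.
Qed.
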